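(* Let $n\ge1$ and $\mathbf{x}\in\{0,1\}^n$. Let $\omega=\omega(\mathbf{x}')$, let $m$ be the number of 1-runs in $\mathbf{x}'$, and for $i=1,2$ let $m_i$ be the number of 1-runs of $\mathbf{x}'$ of length $i$. For $j=0,1,\dots,6$ let $B_j$ be the number of $\mathbf{y}\in\Phi_3(\mathbf{x})$ with $\omega(\mathbf{y}')=\omega-j$. Then (a) $B_0+B_1=1+m+\binom{m}{2}+\binom{m}{3}$; (b) $B_2+B_3=(\omega-m)\bigl(1+m+\binom{m}{2}\bigr)-m(m-m_1)$; (c) $B_4+B_5=(1+m)\left[\binom{\omega-m}{2}-(\omega-m)\right]-(\omega-2m-3)(m-m_1)-m_2$; (d) $B_6=\binom{\omega-m}{3}-(\omega-m)(\omega-m+1)+(\omega-m)(m-m_1)+4(\omega-2m+m_1)+m_2$.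
   Context: A grain pattern of length $n$ is a subset $E\subseteq\{2,\dots,n\}$ containing no two consecutive integers. For such $E$, $\phi_E:\{0,1\}^n\to\{0,1\}^n$ sends $\mathbf{x}=(x_1,\dots,x_n)$ to $\mathbf{y}$ with $y_j=x_{j-1}$ if $j\in E$ and $y_j=x_j$ otherwise. $\Phi_t(\mathbf{x})=\{\phi_E(\mathbf{x}): E \text{ a grain pattern of length } n,\ |E|\le t\}$ (a set). The derivative sequence of $\mathbf{x}$ is $\mathbf{x}'=(x'_2,\dots,x'_n)$ with $x'_j=x_{j-1}\oplus x_j$ (mod 2); $\omega(\cdot)$ is Hamming weight; a 1-run of $\mathbf{x}'$ is a maximal block of consecutive 1s. Binomial coefficients $\binom{a}{b}$ are $0$ when $b>a\ge0$. *)

(* Binary words are n.-tuple bool; positions 1..n of the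
   paper are the 0-based indices 0..n-1 (type 'I_n). *)
From mathcomp Require Import all_boot all_order all_algebra.
Set Implicit Arguments. Unset Strict Implicit. Unset Printing Implicit Defensive.

(* Grain pattern of length n: E ⊆ {2,..,n} (1-based) = {1,..,n-1} (0-based),
   with no two consecutive integers. *)
Definition grain_pattern (n : nat) (E : {set 'I_n}) : bool :=
  [forall i in E, 0 < val i] &&
  [forall i in E, forall j in E, val j != (val i).+1].

Definition phiE (n : nat) (E : {set 'I_n}) (x : n.-tuple bool) : n.-tuple bool :=
  [tuple (if i \in E then nth false x (val i).-1 else nth false x (val i)) | i < n].

Definition Phi (n t : nat) (x : n.-tuple bool) : {set n.-tuple bool} :=
  [set phiE E x | E : {set 'I_n} in [set E : {set 'I_n} | grain_pattern E && (#|E| <= t)]].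

Definition deriv_seq (s : seq bool) : seq bool :=
  [seq (p.1 (+) p.2) | p <- zip s (behead s)].

Definition weight (s : seq bool) : nat := count id s.

(* Lengths of the maximal blocks of consecutive 1s (1-runs), left to right;
   [cur] is the length of the currently open block. *)
Fixpoint runs1_aux (cur : nat) (s : seq bool) : seq nat :=
  match s with
  | [::] => if 0 < cur then [:: cur] else [::]
  | true :: s' => runs1_aux cur.+1 s'
  | false :: s' => (if 0 < cur then [:: cur] else [::]) ++ runs1_aux 0 s'
  end.
Definition runs1 (s : seq bool) : seq nat := runs1_aux 0 s.

Definition nruns (s : seq bool) : nat := size (runs1 s).
Definition nruns_len (i : nat) (s : seq bool) : nat := count (pred1 i) (runs1 s).

Definition Bcount (n : nat) (x : n.-tuple bool) (j : nat) : nat :=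
  #|[set y in Phi 3 x | weight (deriv_seq y) + j == weight (deriv_seq x)]|.

(* A word is determined by its first letter and its derivative, and grains never
   change the first letter, so Phi_3(x) is in bijection with the derivatives
   reachable from x' with at most three grains.  On the derivative a grain at a 1
   either moves the end of a 1-run one step to the right (10 -> 01, possibly
   merging two runs), deletes two 1s (11 -> 00), or deletes a final 1; a grain at
   a 0 does nothing.  Hence the number of reachable derivatives whose weight drops
   by 2k or 2k+1 obeys a recurrence on the first letters of x', and the polynomials
   of the statement in w, m, m1, m2, together with their analogues for fewer
   grains, obey the same recurrence. *)

From mathcomp Require Import all_boot all_order all_algebra.
From mathcomp Require Import ring zify.
Import GRing.Theory Num.Theory.
Set Implicit Arguments. Unset Strict Implicit. Unset Printing Implicit Defensive.

Lemma count_iota0S (f : nat -> bool) n :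
  count f (iota 0 n.+1) = f 0 + count (fun i => f i.+1) (iota 0 n).
Proof. by rewrite /= -[1]addn0 iotaDl count_map. Qed.

Lemma card_ord_count n (P : pred nat) : #|[set i : 'I_n | P i]| = count P (iota 0 n).
Proof.
rewrite -sum1_card -sum1_count (eq_bigl (fun i : 'I_n => P i)) => [|i]; last by rewrite inE.
by rewrite -(big_mkord P (fun _ => 1)) /index_iota subn0.
Qed.

Lemma card_tuples_in (T : finType) n (S : seq (seq T)) :
  uniq S -> all (fun s => size s == n) S ->
  #|[set y : n.-tuple T | val y \in S]| = size S.
Proof.
elim: S => [_ _|a S IH /andP [aS uS] /andP [Ha sizeS]].
  by apply/eqP; rewrite cards_eq0; apply/eqP/setP => y; rewrite !inE.
have -> : [set y : n.-tuple T | val y \in a :: S] =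
          Tuple Ha |: [set y : n.-tuple T | val y \in S].
  by apply/setP => y; rewrite !inE.
by rewrite cardsU1 IH // inE /= (negbTE aS).
Qed.

Lemma size_deriv_seq s : size (deriv_seq s) = (size s).-1.
Proof. by rewrite size_map size_zip size_behead minnE subKn ?leq_pred. Qed.

Lemma nth_deriv_seq s i : i < (size s).-1 ->
  nth false (deriv_seq s) i = nth false s i (+) nth false s i.+1.
Proof.
have size_zip_behead : size (zip s (behead s)) = (size s).-1.
  by rewrite size_zip size_behead minnE subKn ?leq_pred.
move=> lti; rewrite (nth_map (false, false)) ?size_zip_behead //.
by rewrite nth_zip_cond size_zip_behead lti /= nth_behead.
Qed.

Lemma deriv_seq_cons2 a b s : deriv_seq [:: a, b & s] = a (+) b :: deriv_seq (b :: s).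
Proof. by []. Qed.

Fixpoint antideriv (a : bool) (s : seq bool) : seq bool :=
  if s is b :: s' then a :: antideriv (a (+) b) s' else [:: a].

Lemma deriv_antideriv a s : deriv_seq (antideriv a s) = s.
Proof.
elim: s a => [|b s IH] a //=.
have -> : deriv_seq (a :: antideriv (a (+) b) s) =
          a (+) (a (+) b) :: deriv_seq (antideriv (a (+) b) s) by case: s {IH}.
by rewrite IH addKb.
Qed.

Lemma antideriv_deriv s : 0 < size s -> antideriv (nth false s 0) (deriv_seq s) = s.
Proof.
case: s => // a s _ /=; elim: s a => [|b s IH] a //.
by rewrite deriv_seq_cons2 /= addKb IH.
Qed.

Lemma size_antideriv a s : size (antideriv a s) = (size s).+1.
Proof. by elim: s a => [|b s IH] a //=; rewrite IH. Qed.

Lemma deriv_seq_inj s1 s2 : size s1 = size s2 ->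
  nth false s1 0 = nth false s2 0 -> deriv_seq s1 = deriv_seq s2 -> s1 = s2.
Proof.
case: s1 s2 => [|a s1] [|b s2] // sz h12 d12.
by rewrite -(antideriv_deriv (s := a :: s1)) // -[RHS]antideriv_deriv // h12 d12.
Qed.

(** * Grains acting on derivatives *)

(* The effect on a derivative of grains at the word positions [i.+1] with [f i]:
   entry [i] is cleared and its old value is added to entry [i.+1]. *)
Definition grain_deriv (f : nat -> bool) (d : seq bool) : seq bool :=
  mkseq (fun i => if f i then false else
           if (0 < i) && f i.-1 then nth false d i.-1 (+) nth false d i
           else nth false d i) (size d).

Definition nonadjacent (f : nat -> bool) := forall i, f i -> ~~ f i.+1.

Lemma size_grain_deriv f d : size (grain_deriv f d) = size d.
Proof. exact: size_mkseq. Qed.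

Lemma grain_deriv_cons f a r : f 0 = false ->
  grain_deriv f (a :: r) = a :: grain_deriv (fun i => f i.+1) r.
Proof.
move=> f0; rewrite /grain_deriv /mkseq /= f0 /=; congr cons.
rewrite -[1]addn0 iotaDl -map_comp; apply: eq_map => -[|i] /=; by rewrite ?f0.
Qed.

Lemma grain_deriv_grain f a b r : f 0 = true -> f 1 = false ->
  grain_deriv f [:: a, b & r] = [:: false, a (+) b & grain_deriv (fun i => f i.+2) r].
Proof.
move=> f0 f1; rewrite /grain_deriv /mkseq /= f0 f1 /=; congr [:: _, _ & _].
rewrite -[2]addn0 iotaDl -map_comp; apply: eq_map => -[|i] /=; by rewrite ?f1.
Qed.

Lemma eq_in_grain_deriv f g d : {in gtn (size d), f =1 g} ->
  grain_deriv f d = grain_deriv g d.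
Proof.
move=> fg; apply/eq_in_map => i; rewrite mem_iota add0n => lti.
by rewrite fg //; case: i lti => [|i] lti //=; rewrite fg // inE ltnW.
Qed.

(* Only a grain on a 1 of the derivative changes it, so this list enumerates
   each derivative reachable with at most [t] grains exactly once. *)
Fixpoint grain_derivs (t : nat) (d : seq bool) {struct d} : seq (seq bool) :=
  match d with
  | [::] => [:: [::]]
  | false :: r => map (cons false) (grain_derivs t r)
  | true :: r =>
    match r with
    | [::] => [:: [:: true]] ++ (if t is _.+1 then [:: [:: false]] else [::])
    | b :: r' => map (cons true) (grain_derivs t r) ++
        (if t is t'.+1 then map (fun s => false :: ~~ b :: s) (grain_derivs t' r')
         else [::])
    end
  end.

Lemma grain_derivs_true t b r : grain_derivs t [:: true, b & r] =
  map (cons true) (grain_derivs t (b :: r)) ++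
  (if t is t'.+1 then map (fun s => false :: ~~ b :: s) (grain_derivs t' r) else [::]).
Proof. by []. Qed.

Lemma grain_derivs_false t r :
  grain_derivs t (false :: r) = map (cons false) (grain_derivs t r).
Proof. by []. Qed.

Lemma grain_derivs_sound t d s : s \in grain_derivs t d ->
  exists f, [/\ nonadjacent f, count f (iota 0 (size d)) <= t & s = grain_deriv f d].
Proof.
have [N] := ubnP (size d); elim: N d t s => // N IH d t s.
have cons_image a d' t' f : nonadjacent f -> count f (iota 0 (size d')) <= t' ->
    exists g, [/\ nonadjacent g, count g (iota 0 (size (a :: d'))) <= t'
               & a :: grain_deriv f d' = grain_deriv g (a :: d')].
  move=> nf cf; exists (fun i => if i is i'.+1 then f i' else false).
  by rewrite count_iota0S grain_deriv_cons //; split => // -[|i] //; apply: nf.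
case: d => [|[] [|b r]] ltd.
- by rewrite inE => /eqP ->; exists (fun=> false).
- case: t => [|t]; rewrite !inE; first by move=> /eqP ->; exists (fun=> false).
  case/orP => /eqP ->; first by exists (fun=> false).
  by exists (pred1 0); split => // -[|i].
- rewrite grain_derivs_true mem_cat => /orP[].
    by case/mapP => s' /(IH (b :: r) _ _ ltd) [f [nf cf ->]] ->; apply: cons_image.
  case: t => [|t] //; case/mapP => s' /(IH r _ _ (ltnW ltd)) [f [nf cf ->]] ->.
  exists (fun i => match i with 0 => true | 1 => false | i'.+2 => f i' end); split.
  + by move=> [|[|i]] //; apply: nf.
  + by rewrite !count_iota0S.
  + by rewrite grain_deriv_grain.
- rewrite grain_derivs_false.
  case/mapP => s' /(IH [::] _ _ ltd) [f [nf cf ->]] ->.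
  exact: (cons_image false [::]).
- rewrite grain_derivs_false.
  by case/mapP => s' /(IH (b :: r) _ _ ltd) [f [nf cf ->]] ->; apply: cons_image.
Qed.

Lemma grain_derivs_complete t d f : nonadjacent f ->
  count f (iota 0 (size d)) <= t -> grain_deriv f d \in grain_derivs t d.
Proof.
have [N] := ubnP (size d); elim: N d t f => // N IH d t f.
have nfS f' : nonadjacent f' -> nonadjacent (fun i => f' i.+1) by move=> nf i; apply: nf.
case: d => [|a r] ltd nf; first by rewrite inE.
rewrite count_iota0S; case f0: (f 0) => cf.
  have f1 : f 1 = false by apply/negbTE/nf; rewrite f0.
  case: r ltd cf => [|b r] ltd cf.
    rewrite /grain_deriv /mkseq /= f0.
    by case: (a); case: t cf => // t _; rewrite !inE eqxx ?orbT.
  rewrite grain_deriv_grain //; move: cf; rewrite count_iota0S f1 add1n => cf.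
  case: (a).
    case: t cf => [|t] // cf; rewrite grain_derivs_true mem_cat; apply/orP; right.
    apply/mapP; exists (grain_deriv (fun i => f i.+2) r) => //.
    exact: IH r t _ (ltnW ltd) (nfS _ (nfS _ nf)) cf.
  rewrite grain_derivs_false (_ : false (+) b :: _ = grain_deriv (fun i => f i.+1) (b :: r)).
    rewrite map_f //; apply: (IH (b :: r)) => //; first exact: nfS.
    by rewrite count_iota0S /= f1 ltnW.
  by rewrite grain_deriv_cons.
rewrite grain_deriv_cons //; case: (a).
  case: r ltd cf => [|b r] ltd cf; first by rewrite inE.
  rewrite grain_derivs_true mem_cat map_f //; exact: IH (b :: r) t _ ltd (nfS _ nf) cf.
rewrite grain_derivs_false map_f //; exact: IH r t _ ltd (nfS _ nf) cf.
Qed.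

Lemma uniq_grain_derivs t d : uniq (grain_derivs t d).
Proof.
have [N] := ubnP (size d); elim: N d t => // N IH [|[] [|b r]] t ltd //.
- by case: t.
- rewrite grain_derivs_true cat_uniq map_inj_uniq ?IH //; last by move=> ? ? [].
  case: t => [|t] //=; rewrite map_inj_uniq ?IH ?andbT //; last 2 first.
  + exact: ltnW.
  + by move=> ? ? [].
  by apply/hasPn => _ /mapP[s _ ->]; apply/mapP => -[].
- by rewrite grain_derivs_false map_inj_uniq ?IH //; move=> ? ? [].
Qed.

Lemma size_grain_derivs t d s : s \in grain_derivs t d -> size s = size d.
Proof. by case/grain_derivs_sound => f [_ _ ->]; rewrite size_grain_deriv. Qed.

Lemma weight_grain_derivs t d s :
  s \in grain_derivs t d -> weight s <= weight d <= weight s + t.*2.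
Proof.
have [N] := ubnP (size d); elim: N d t s => // N IH [|[] [|b r]] t s ltd.
- by rewrite inE => /eqP ->.
- case: t => [|t]; rewrite !inE; first by move=> /eqP ->.
  by case/orP => /eqP ->; rewrite /weight /=; lia.
- rewrite grain_derivs_true mem_cat => /orP[/mapP[s' /(IH (b :: r) _ _ ltd) ws ->]|].
    by move: ws; rewrite /weight /=; lia.
  case: t => [|t] //; case/mapP => s' /(IH r _ _ (ltnW ltd)) ws ->.
  by move: ws; rewrite /weight /=; case: (b) => /=; lia.
- by rewrite inE => /eqP ->.
- by rewrite grain_derivs_false => /mapP[s' /(IH (b :: r) _ _ ltd) ws ->].
Qed.

Definition in_pattern n (E : {set 'I_n}) (j : nat) : bool := [exists i in E, val i == j].

Lemma in_pattern_ord n (E : {set 'I_n}) (i : 'I_n) : in_pattern E i = (i \in E).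
Proof.
apply/existsP/idP => [[k /andP[kE /eqP/val_inj <-]] // | iE].
by exists i; rewrite iE eqxx.
Qed.

Lemma nth_phiE n (E : {set 'I_n}) (x : n.-tuple bool) j : j < n ->
  nth false (phiE E x) j = if in_pattern E j then nth false x j.-1 else nth false x j.
Proof.
by move=> ltjn; rewrite -[j]/(val (Ordinal ltjn)) -tnth_nth tnth_mktuple in_pattern_ord.
Qed.

Lemma grain_pattern_0 n (E : {set 'I_n}) : grain_pattern E -> in_pattern E 0 = false.
Proof.
case/andP => /forall_inP E_gt0 _; apply/existsP => -[i /andP[iE /eqP i0]].
by move: (E_gt0 i iE); rewrite i0.
Qed.

Lemma grain_pattern_nonadjacent n (E : {set 'I_n}) :
  grain_pattern E -> nonadjacent (in_pattern E).
Proof.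
case/andP => _ /forall_inP E_sep j /existsP[i /andP[iE /eqP ij]].
apply/existsP => -[k /andP[kE /eqP kj]].
by move: (E_sep i iE) => /forall_inP/(_ k kE); rewrite kj ij eqxx.
Qed.

Lemma deriv_phiE n (E : {set 'I_n}) (x : n.-tuple bool) : grain_pattern E ->
  deriv_seq (phiE E x) = grain_deriv (fun k => in_pattern E k.+1) (deriv_seq x).
Proof.
move=> gE; apply: (@eq_from_nth _ false).
  by rewrite size_grain_deriv !size_deriv_seq !size_tuple.
rewrite size_deriv_seq size_tuple => i lti.
have lti1 : i.+1 < n by rewrite -ltn_predRL.
have ltix : i < (size x).-1 by rewrite size_tuple.
rewrite nth_deriv_seq ?size_tuple // !nth_phiE ?(ltnW lti1) //.
rewrite /grain_deriv nth_mkseq ?size_deriv_seq ?size_tuple //.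
case E_i1: (in_pattern E i.+1).
  have -> : in_pattern E i = false.
    by apply/negbTE/negP => E_i; have := grain_pattern_nonadjacent gE E_i; rewrite E_i1.
  by rewrite addbb.
case E_i: (in_pattern E i) => /=; last first.
  by case: i {lti lti1 E_i1} E_i ltix => [|i] /= E_i ltix; rewrite ?E_i nth_deriv_seq.
case: i E_i {E_i1 lti lti1} ltix => [|i] E_i ltix; first by rewrite grain_pattern_0 in E_i.
by rewrite /= E_i !nth_deriv_seq ?(ltnW ltix) // addbA addbK.
Qed.

Lemma head_phiE n (E : {set 'I_n}) (x : n.-tuple bool) : grain_pattern E ->
  nth false (phiE E x) 0 = nth false x 0.
Proof.
case: n E x => [|n] E x gE; first by rewrite !nth_default ?size_tuple.
by rewrite nth_phiE // grain_pattern_0.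
Qed.

Lemma card_grain_pattern n (E : {set 'I_n}) : grain_pattern E ->
  #|E| = count (fun k => in_pattern E k.+1) (iota 0 n.-1).
Proof.
move=> gE; have {1}-> : E = [set i : 'I_n | in_pattern E i].
  by apply/setP => i; rewrite inE in_pattern_ord.
by rewrite card_ord_count; case: n E gE => [|n] E gE //; rewrite count_iota0S grain_pattern_0.
Qed.

Lemma mem_Phi n t (x y : n.-tuple bool) : (y \in Phi t x) =
  (nth false y 0 == nth false x 0) && (deriv_seq y \in grain_derivs t (deriv_seq x)).
Proof.
apply/imsetP/andP => [[E]|[/eqP y0 /grain_derivs_sound[f [nf cf yd]]]].
  rewrite inE => /andP[gE cE] ->; split; first by rewrite head_phiE.
  rewrite deriv_phiE //; apply: grain_derivs_complete.
    by move=> k; apply: grain_pattern_nonadjacent.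
  by rewrite size_deriv_seq size_tuple -card_grain_pattern.
pose E := [set i : 'I_n | (0 < i) && f i.-1].
have gE : grain_pattern E.
  apply/andP; split; apply/forall_inP => i; rewrite inE => /andP[i_gt0 fi] //.
  apply/forall_inP => j; rewrite inE => /andP[_ fj]; apply/eqP => ji.
  by move: (nf _ fi) fj; rewrite prednK // ji => /negbTE ->.
exists E.
  rewrite inE gE (card_ord_count n (fun j => (0 < j) && f j.-1)) /=.
  by move: cf; rewrite size_deriv_seq size_tuple; case: (n) => [|n'] //; rewrite count_iota0S.
apply: val_inj; apply: deriv_seq_inj; first by rewrite !size_tuple.
  by rewrite y0 head_phiE.
rewrite yd deriv_phiE //; apply: eq_in_grain_deriv => k.
rewrite inE size_deriv_seq size_tuple => ltk.
have ltk1 : k.+1 < n by rewrite -ltn_predRL.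
by rewrite -[k.+1]/(val (Ordinal ltk1)) in_pattern_ord inE.
Qed.

(** * Counting by weight loss *)

Definition loss_count t d j := count (fun s => weight s + j == weight d) (grain_derivs t d).

Lemma Bcount_loss_count n (x : n.-tuple bool) j :
  0 < n -> Bcount x j = loss_count 3 (deriv_seq x) j.
Proof.
move=> n_gt0; rewrite /Bcount; set x0 := nth false x 0; set d := deriv_seq x.
pose S := map (antideriv x0) [seq s <- grain_derivs 3 d | weight s + j == weight d].
have -> : [set y in Phi 3 x | weight (deriv_seq y) + j == weight d] =
          [set y : n.-tuple bool | val y \in S].
  apply/setP => y; rewrite !inE mem_Phi; apply/idP/mapP => [/andP[/andP[/eqP y0 yd] wy]|].
    exists (deriv_seq y); first by rewrite mem_filter wy yd.
    by rewrite /x0 -y0 antideriv_deriv // size_tuple.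
  case=> s; rewrite mem_filter => /andP[ws sd] ->.
  by rewrite deriv_antideriv ws sd !andbT; case: (s) => [|? ?].
rewrite card_tuples_in ?size_map ?size_filter //.
  rewrite map_inj_in_uniq ?filter_uniq ?uniq_grain_derivs // => s1 s2 _ _ e12.
  by move: (congr1 deriv_seq e12); rewrite !deriv_antideriv.
apply/allP => y /mapP[s]; rewrite mem_filter => /andP[_ /size_grain_derivs sz] ->.
by rewrite size_antideriv sz size_deriv_seq size_tuple prednK.
Qed.

Definition loss_pair_count t d k := loss_count t d k.*2 + loss_count t d k.*2.+1.

Lemma loss_count_eq0 t d j : t.*2 < j -> loss_count t d j = 0.
Proof.
move=> ltj; apply/eqP; rewrite -leqn0 leqNgt -has_count; apply/hasPn => s.
by case/weight_grain_derivs/andP => _; apply: contraL => /eqP <-; rewrite -ltnNge ltn_add2l.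
Qed.

Lemma loss_count_true_true t r j : loss_count t [:: true, true & r] j =
  loss_count t (true :: r) j + (if (0 < t) && (1 < j) then loss_count t.-1 r (j - 2) else 0).
Proof.
rewrite /loss_count grain_derivs_true count_cat count_map; congr (_ + _).
case: t => [|t] //=; rewrite count_map; case: ifP => lt1j.
  by apply: eq_count => s /=; apply/eqP/eqP; rewrite /weight /=; lia.
rewrite -(count_pred0 (grain_derivs t r)); apply: eq_in_count => s /weight_grain_derivs.
by rewrite /weight /= => lims; apply/eqP; lia.
Qed.

Lemma loss_count_true_false t r j : loss_count t [:: true, false & r] j =
  loss_count t r j + (if 0 < t then loss_count t.-1 r j else 0).
Proof.
rewrite /loss_count grain_derivs_true grain_derivs_false count_cat !count_map.
by case: t => [|t] //=; rewrite count_map.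
Qed.

Lemma loss_pair_count_nil t k : loss_pair_count t [::] k = (k == 0).
Proof. by case: k. Qed.

Lemma loss_pair_count_true t k :
  loss_pair_count t [:: true] k = (k == 0) * (1 + (0 < t)).
Proof. by case: t => [|t]; case: k => [|[|k]]. Qed.

Lemma loss_pair_count_false t r k :
  loss_pair_count t (false :: r) k = loss_pair_count t r k.
Proof. by rewrite /loss_pair_count /loss_count grain_derivs_false !count_map. Qed.

Lemma loss_pair_count_true_true t r k : loss_pair_count t [:: true, true & r] k =
  loss_pair_count t (true :: r) k +
  (if (0 < t) && (0 < k) then loss_pair_count t.-1 r k.-1 else 0).
Proof.
rewrite /loss_pair_count !loss_count_true_true.
by case: t => [|t]; case: k => [|k] //=; rewrite ?addn0 // !doubleS !subn2 /=; lia.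
Qed.

Lemma loss_pair_count_true_false t r k : loss_pair_count t [:: true, false & r] k =
  loss_pair_count t r k + (if 0 < t then loss_pair_count t.-1 r k else 0).
Proof. by rewrite /loss_pair_count !loss_count_true_false; case: (0 < t); lia. Qed.

(** * The closed forms *)

Lemma runs1_aux_open s : exists h T, forall c, runs1_aux c.+1 s = (c + h).+1 :: T.
Proof.
elim: s => [|[] s [h [T IH]]].
- by exists 0, [::] => c; rewrite addn0.
- by exists h.+1, T => c /=; rewrite IH addnS.
- by exists 0, (runs1_aux 0 s) => c; rewrite addn0.
Qed.

Local Open Scope ring_scope.

Definition choose2 (a : rat) := a * (a - 1) / 2.
Definition choose3 (a : rat) := a * (a - 1) * (a - 2) / 6.

(* [loss_poly t k w m m1 m2] is [loss_pair_count t d k] for a derivative [d] of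
   weight [w] with [m] 1-runs, [m1] of length 1 and [m2] of length 2.  The rows
   [t = 3] are the formulas of the theorem; the others are needed because the
   recurrence lowers [t]. *)
Definition loss_poly (t k : nat) (w m m1 m2 : rat) : rat :=
  let d := w - m in let e := w - 2 * m + m1 in
  match t, k with
  | 0, 0 => 1
  | 1, 0 => 1 + m
  | 1, 1 => d
  | 2, 0 => 1 + m + choose2 m
  | 2, 1 => d * m + e
  | 2, 2 => choose2 d - e
  | 3, 0 => 1 + m + choose2 m + choose3 m
  | 3, 1 => d * (1 + m + choose2 m) - m * (m - m1)
  | 3, 2 => (1 + m) * (choose2 d - d) - (w - 2 * m - 3) * (m - m1) - m2
  | 3, 3 => choose3 d - d * (d + 1) + d * (m - m1) + 4 * e + m2
  | _, _ => 0
  end.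

Definition loss_poly_of t k d :=
  loss_poly t k (weight d)%:R (nruns d)%:R (nruns_len 1 d)%:R (nruns_len 2 d)%:R.

Ltac loss_poly_cases t k :=
  case: t => [|[|[|[|t]]]] // _; case: k => [|[|[|[|k]]]];
  rewrite /loss_poly_of /nruns /nruns_len /loss_poly /choose2 /choose3 //=; field.

Lemma loss_poly_of_nil t k : (t <= 3)%N -> loss_poly_of t k [::] = (k == 0%N)%:R.
Proof. by loss_poly_cases t k. Qed.

Lemma loss_poly_of_true t k : (t <= 3)%N ->
  loss_poly_of t k [:: true] = ((k == 0%N) * (1 + (0 < t)))%:R.
Proof. by loss_poly_cases t k. Qed.

Lemma loss_poly_of_false t k r : loss_poly_of t k (false :: r) = loss_poly_of t k r.
Proof. by []. Qed.

Lemma loss_poly_of_true_false t k r : (t <= 3)%N ->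
  loss_poly_of t k [:: true, false & r] =
  loss_poly_of t k r + (if (0 < t)%N then loss_poly_of t.-1 k r else 0).
Proof.
rewrite /loss_poly_of /nruns /nruns_len.
rewrite (_ : runs1 [:: true, false & r] = 1%N :: runs1 r) //.
by loss_poly_cases t k.
Qed.

Lemma loss_poly_of_true_true t k r : (t <= 3)%N ->
  loss_poly_of t k [:: true, true & r] = loss_poly_of t k (true :: r) +
  (if (0 < t)%N && (0 < k)%N then loss_poly_of t.-1 k.-1 r else 0).
Proof.
rewrite /loss_poly_of /nruns /nruns_len.
case: r => [|[] r]; first by loss_poly_cases t k.
  have [h [T runsE]] := runs1_aux_open r.
  rewrite /runs1 /= !runsE.
  by case: h {runsE} => [|[|h]]; loss_poly_cases t k.
rewrite (_ : runs1 [:: true, true, false & r] = 2%N :: runs1 r) //.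
rewrite (_ : runs1 [:: true, false & r] = 1%N :: runs1 r) //.
by loss_poly_cases t k.
Qed.

Lemma loss_pair_countE t d k : (t <= 3)%N ->
  (loss_pair_count t d k)%:R = loss_poly_of t k d.
Proof.
have [N] := ubnP (size d); elim: N t d k => // N IH t d k.
case: d => [|[] r] ltd le_t3.
- by rewrite loss_pair_count_nil loss_poly_of_nil.
- have le_pred_t3 : (t.-1 <= 3)%N by apply: leq_trans (leq_pred t) le_t3.
  case: r ltd => [|[] r] ltd.
  + by rewrite loss_pair_count_true loss_poly_of_true.
  + have ltr : (size r < N)%N := ltnW ltd.
    rewrite loss_pair_count_true_true loss_poly_of_true_true // natrD (IH t (true :: r)) //.
    by case: ifP => // _; rewrite IH.
  + have ltr : (size r < N)%N := ltnW ltd.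
    rewrite loss_pair_count_true_false loss_poly_of_true_false // natrD IH //.
    by case: ifP => // _; rewrite IH.
- by rewrite loss_pair_count_false loss_poly_of_false IH.
Qed.

Lemma natr_choose2 n : ('C(n, 2))%:R = choose2 n%:R.
Proof.
rewrite /choose2; elim: n => [|n IH]; first by rewrite bin0n !mul0r.
by rewrite binS bin1 natrD IH; field.
Qed.

Lemma natr_choose3 n : ('C(n, 3))%:R = choose3 n%:R.
Proof.
rewrite /choose3; elim: n => [|n IH]; first by rewrite bin0n !mul0r.
by rewrite binS natrD IH natr_choose2 /choose2; field.
Qed.

(* [w - m] is the number of derivatives obtained by clearing two adjacent 1s. *)
Lemma nruns_le_weight s : (nruns s <= weight s)%N.
Proof.
have := loss_pair_countE s 1 (isT : (1 <= 3)%N).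
by rewrite /loss_poly_of /= => dE; rewrite -(ler_nat rat) -subr_ge0 -dE ler0n.
Qed.

Theorem lemma4p4 (n : nat) (x : n.-tuple bool) : (1 <= n)%N ->
  let w := weight (deriv_seq x) in
  let m := nruns (deriv_seq x) in
  let m1 := nruns_len 1 (deriv_seq x) in
  let m2 := nruns_len 2 (deriv_seq x) in
  let B := Bcount x in
  let W : int := w%:Z in
  let M : int := m%:Z in
  let M1 : int := m1%:Z in
  let M2 : int := m2%:Z in
  let d : int := W - M in
  [/\ ((B 0 + B 1)%N%:Z = 1 + M + ('C(m, 2))%:Z + ('C(m, 3))%:Z),
      ((B 2 + B 3)%N%:Z = d * (1 + M + ('C(m, 2))%:Z) - M * (M - M1)),
      ((B 4 + B 5)%N%:Z = (1 + M) * (('C(w - m, 2))%:Z - d)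
                          - (W - 2 * M - 3) * (M - M1) - M2)
    & ((B 6%N)%:Z = ('C(w - m, 3))%:Z - d * (d + 1) + d * (M - M1)
                  + 4 * (W - 2 * M + M1) + M2)].
Proof.
move=> n_gt0 /=; set dx := deriv_seq x.
have B_pair k : (Bcount x k.*2 + Bcount x k.*2.+1)%N = loss_pair_count 3 dx k.
  by rewrite !Bcount_loss_count.
have B6 : Bcount x 6 = loss_pair_count 3 dx 3.
  by rewrite /loss_pair_count Bcount_loss_count // (@loss_count_eq0 3 dx 7) ?addn0.
rewrite (B_pair 0%N) (B_pair 1%N) (B_pair 2%N) B6.
split; apply: (@intr_inj rat); rewrite -!pmulrn loss_pair_countE // /loss_poly_of.
all: rewrite ?(natrD, intrD, intrN, intrM) -?pmulrn.
all: rewrite ?natr_choose2 ?natr_choose3 ?natrB ?nruns_le_weight //.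
all: by rewrite /loss_poly /choose2 /choose3; field.
Qed.
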